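(* Let $\mathcal{A}$ be a finite-domain structure with domain $A$ of size $n$ on an infinite relational signature $\sigma$. For each $m$ (and each set $\Omega_m$ of adversaries of length $m$ for which the sentences below are well defined), $\mathcal{A}\models\phi_{n,\Omega_m,\mathcal{A}}$ if and only if for every finite subset $\sigma'\subset\sigma$, $\mathcal{A}^{\sigma'}\models\phi^{\sigma'}_{n,\Omega_m,\mathcal{A}}$.
   Context: For $\sigma'\subseteq\sigma$, $\mathcal{A}^{\sigma'}$ is the $\sigma'$-reduct of $\mathcal{A}$. An adversary of length $m$ is a set $\mathscr{O}\subseteq A^m$ of $m$-tuples; $\Omega_m$ is a set of such adversaries. A map $\mu:[n]\times[m]\to A$ is consistent with $\mathscr{O}$ if for every $(i_1,\ldots,i_m)\in[n]^m$ the tuple $(\mu(i_1,1),\ldots,\mu(i_m,m))$ lies in $\mathscr{O}$; $A^{[n.m]}_{\restriction\mathscr{O}}$ is the set of such maps. Let $\sigma^{(n.m)}$ be $\sigma$ expanded by constants $c_{i,j}$, $i\in[n]$, $j\in[m]$, and let $\mathfrak{A}_{\mathscr{O},\mu}$ be the expansion of $\mathcal{A}$ interpreting $c_{i,j}$ as $\mu(i,j)$. Form the direct product structure $P=\bigotimes_{\mathscr{O}\in\Omega_m}\bigotimes_{\mu\in A^{[n.m]}_{\restriction\mathscr{O}}}\mathfrak{A}_{\mathscr{O},\mu}$ (domain the product of copies of $A$, relations and constants interpreted coordinatewise). It is assumed that the $n.m$ constants are interpreted by pairwise distinct elements of $P$ (otherwise the sentence is not defined). The canonical query of the $\sigma$-reduct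 of $P$ is the conjunction, with one variable per element of $P$, of all atoms $R(x_{p_1},\ldots,x_{p_r})$ with $R\in\sigma$ and $(p_1,\ldots,p_r)\in R^P$. $\phi_{n,\Omega_m,\mathcal{A}}$ is the (possibly infinite) sentence obtained from this canonical query by renaming the variable of the element interpreting $c_{i,j}$ as $w_{i,j}$, universally quantifying all $w_{i,j}$ outermost and existentially quantifying all remaining variables. For finite $\sigma'\subset\sigma$, $\phi^{\sigma'}_{n,\Omega_m,\mathcal{A}}$ is the (finite) sentence obtained in the same way from the product $\bigotimes_{\mathscr{O}}\bigotimes_{\mu}\mathfrak{A}^{\sigma'}_{\mathscr{O},\mu}$ of the expansions of $\mathcal{A}^{\sigma'}$ by the constants, using only the relations of $\sigma'$. *)

From mathcomp Require Import all_boot.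
Set Implicit Arguments. Unset Strict Implicit. Unset Printing Implicit Defensive.

Definition structure (sig : Type) (ar : sig -> nat) (A : Type) :=
  forall R : sig, ('I_(ar R) -> A) -> Prop.

Section Product.
Variables (sig : Type) (ar : sig -> nat) (A : finType)
          (S : structure ar A) (n m : nat).

Definition adversary := {set {ffun 'I_m -> A}}.

Definition consistent (O : adversary) (mu : {ffun 'I_n * 'I_m -> A}) : bool :=
  [forall ix : {ffun 'I_m -> 'I_n}, [ffun j => mu (ix j, j)] \in O].

Definition pindex (Omega : {set adversary}) :=
  {x : adversary * {ffun 'I_n * 'I_m -> A} | (x.1 \in Omega) && consistent x.1 x.2}.

Variable Omega : {set adversary}.

Definition Pdom := {ffun pindex Omega -> A}.

Definition Prel (R : sig) (p : 'I_(ar R) -> Pdom) : Prop :=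
  forall k : pindex Omega, @S R (fun t => p t k).

Definition Pconst (i : 'I_n) (j : 'I_m) : Pdom :=
  [ffun k : pindex Omega => (val k).2 (i, j)].

(* atoms R(x_{p_1},...,x_{p_r}) with one variable per element of P *)
Record atom := Atom { at_rel : sig; at_args : 'I_(ar at_rel) -> Pdom }.

Definition canonical_query (sig' : sig -> Prop) (a : atom) : Prop :=
  sig' (at_rel a) /\ @Prel (at_rel a) (@at_args a).

Definition atom_holds (v : Pdom -> A) (a : atom) : Prop :=
  @S (at_rel a) (fun t => v (@at_args a t)).

(* A^{sigma'} |= phi^{sigma'}_{n,Omega,A}: the variable of Pconst i j is
   renamed w_{i,j} and universally quantified, all other variables are
   existentially quantified, matrix = conjunction of the canonical query. *)
Definition sat_phi (sig' : sig -> Prop) : Prop :=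
  forall w : 'I_n -> 'I_m -> A,
    exists v : Pdom -> A,
      (forall i j, v (Pconst i j) = w i j) /\
      (forall a, canonical_query sig' a -> atom_holds v a).

(* well-definedness: the n.m constants are pairwise distinct in P *)
Definition consts_distinct : Prop :=
  forall i i' j j', Pconst i j = Pconst i' j' -> i = i' /\ j = j'.

End Product.

(** Since [A] and the domain of the product [P] are finite, there are only
    finitely many assignments of the variables of the canonical query.  For
    each assignment that violates some atom, pick one violated atom; the
    finitely many relation symbols of these atoms form a finite [sigma'].
    An assignment satisfying the [sigma']-query then violates no atom at all,
    so it witnesses the full sentence. *)

From mathcomp Require Import all_boot.
From Stdlib Require List.
From Stdlib Require Import Classical FunctionalExtensionality.

Lemma finite_choice_witnesses {T : finType} {X : Type} (P : T -> X -> Prop) :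
  exists s : list X, forall t, (exists x, P t x) -> exists2 x, List.In x s & P t x.
Proof.
suff [s Hs] : exists s : list X, forall t, t \in enum T ->
    (exists x, P t x) -> exists2 x, List.In x s & P t x.
  by exists s => t; apply: Hs; rewrite mem_enum.
elim: (enum T) => [|t0 l [s Hs]]; first by exists nil.
have [[x0 Px0]|noP] := classic (exists x, P t0 x).
- exists (x0 :: s) => t; rewrite in_cons => /orP [/eqP -> _|lt Pt].
    by exists x0 => //; left.
  by have [x sx Px] := Hs t lt Pt; exists x => //; right.
- exists s => t; rewrite in_cons => /orP [/eqP -> //|]; exact: Hs.
Qed.

Section Compactness.
Variables (sig : Type) (ar : sig -> nat) (A : finType) (S : structure ar A)
          (n m : nat) (Omega : {set adversary A m}).

Local Notation sat := (sat_phi S n Omega).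

Lemma sat_phi_sub (sig1 sig2 : sig -> Prop) :
  (forall R, sig1 R -> sig2 R) -> sat sig2 -> sat sig1.
Proof.
move=> sub12 H w; have [v [vw vq]] := H w.
by exists v; split => // a [sa Pa]; apply: vq; split; first exact: sub12.
Qed.

Lemma atom_holds_ffun (v : Pdom n Omega -> A) (a : atom ar n Omega) :
  atom_holds S [ffun x => v x] a <-> atom_holds S v a.
Proof.
rewrite /atom_holds.
suff -> : (fun t => [ffun x => v x] (at_args (a:=a) t)) = (fun t => v (at_args (a:=a) t))
  by [].
by apply: functional_extensionality => t; rewrite ffunE.
Qed.

Lemma sat_phi_finite_reduct :
  (forall s : list sig, sat (fun R => List.In R s)) -> sat (fun _ => True).
Proof.
move=> H w.
pose violates (f : {ffun Pdom n Omega -> A}) (R : sig) := exists a,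
  [/\ at_rel a = R, canonical_query S (fun _ => True) a & ~ atom_holds S f a].
have [s Hs] := finite_choice_witnesses violates.
have [v [vw vs]] := H s w.
exists v; split => // a qa; apply: NNPP => va.
have [R sR [b [bR [_ Pb] fb]]] : exists2 R, List.In R s & violates [ffun x => v x] R.
  by apply: Hs; exists (at_rel a), a; split => //; rewrite atom_holds_ffun.
by apply/fb/atom_holds_ffun/vs; split => //; rewrite bR.
Qed.

End Compactness.

Theorem lemma1 (sig : Type) (ar : sig -> nat)
  (sig_infinite : forall s : list sig, exists R, ~ List.In R s)
  (A : finType) (S : structure ar A) (n : nat) (hn : #|A| = n)
  (m : nat) (Omega : {set adversary A m})
  (hdist : consts_distinct n Omega) :
  sat_phi S n Omega (fun _ => True) <->
  (forall s : list sig, sat_phi S n Omega (fun R => List.In R s)).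
Proof.
split; last exact: sat_phi_finite_reduct.
by move=> H s; apply: sat_phi_sub H.
Qed.
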